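(* Let $F$ and $G$ be Fourier matrices of the same size $N$ with indexing groups $I_F,I_G$. (a) $F$ and $G$ are equivalent (i.e. $G=SFT^{-1}$ for some $N\times N$ enphased permutation matrices $S,T$) if and only if they are permutation equivalent (i.e. $G=PFR^{-1}$ for some permutation matrices $P,R$), i.e. if and only if $I_F$ and $I_G$ are isomorphic. (b) If $F$ and $G$ are equivalent, then $$\mathrm{Map}_{\mathcal P}(F,G)=\mathrm{Map}_{\mathcal S}(F,G)\cdot\mathrm{Stab}_{\mathcal Z}(F)=\mathrm{Stab}_{\mathcal Z}(G)\cdot\mathrm{Map}_{\mathcal S}(F,G).$$
   Context: For $n\ge1$, $F_n$ is the $n\times n$ matrix with rows and columns indexed by $\mathbb Z_n$ and entries $e^{2\pi i\,\tilde i\tilde j/n}$. A Fourier matrix is $F=F_{N_1}\otimes\cdots\otimes F_{N_r}$ of size $N=N_1\cdots N_r$, indexed by $I_F=\mathbb Z_{N_1}\times\cdots\times\mathbb Z_{N_r}$ with $F_{i,j}=\prod_x(F_{N_x})_{i_x,j_x}$; group indices correspond to ordinary indices via lexicographic order. An enphased permutation matrix is the product of a permutation matrix and a unitary diagonal matrix. Pairs $(S,T)$ of invertible matrices act on $N\times N$ matrices by $(S,T)X=SXT^{-1}$ and are multiplied componentwise. $\mathrm{Map}_{\mathcal P}(F,G)$ is the set of pairs of enphased permutation matrices mapping $F$ to $G$; $\mathrm{Map}_{\mathcal S}(F,G)$ the set of pairs of permutation matrices mapping $F$ to $G$; $\mathrm{Stab}_{\mathcal Z}(F)$ the set of pairs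 of matrices from $\{DZ_k:\ D\text{ unitary diagonal},\ k\in I_F\}$ mapping $F$ to $F$, where $Z_k$ is the permutation matrix with $(Z_k)_{i,i+k}=1$ for $i\in I_F$. Products of sets of pairs are sets of products. *)

From HB Require Import structures.
From mathcomp Require Import all_boot all_order all_algebra all_fingroup all_field.
Set Implicit Arguments. Unset Strict Implicit. Unset Printing Implicit Defensive.
Import Order.TTheory GRing.Theory Num.Theory.
Local Open Scope ring_scope.

(* Complex numbers: algC (algebraic complex numbers; all entries involved are
   roots of unity, hence algebraic). *)

(* omega n = e^{2 pi i / n}: n.-root (-1) is the n-th root of -1 of minimal
   nonnegative argument, i.e. e^{i pi/n} (and -1 for n = 1). *)
Definition omega (n : nat) : algC := (n.-root (-1)) ^+ 2.

(* A Fourier matrix F_{N_1} (x) ... (x) F_{N_r} is given by ns = [:: N_1; ...; N_r].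
   Ordinary index i < N corresponds (lexicographic order, first factor most
   significant) to the group index (digit ns i 0, ..., digit ns i (r-1))
   in Z_{N_1} x ... x Z_{N_r}. *)
Definition radix (ns : seq nat) (x : nat) : nat :=
  (\prod_(x.+1 <= y < size ns) nth 1 ns y)%N.

Definition digit (ns : seq nat) (i x : nat) : nat :=
  ((i %/ radix ns x) %% nth 1 ns x)%N.

Definition addnat (ns : seq nat) (i j : nat) : nat :=
  (\sum_(x < size ns) ((digit ns i x + digit ns j x) %% nth 1 ns x) * radix ns x)%N.

(* group addition of I_F on 'I_N (the default is never used when N = prod ns) *)
Definition addI (ns : seq nat) (N : nat) (i j : 'I_N) : 'I_N :=
  insubd i (addnat ns i j).

Definition fourier (ns : seq nat) (N : nat) : 'M[algC]_N :=
  \matrix_(i < N, j < N)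
     \prod_(x < size ns) omega (nth 1 ns x) ^+ (digit ns i x * digit ns j x)%N.

Definition index_groups_iso (ns ms : seq nat) (N : nat) : Prop :=
  exists phi : 'I_N -> 'I_N, bijective phi /\
    forall i j : 'I_N, phi (addI ns i j) = addI ms (phi i) (phi j).

Definition unitary_diag (N : nat) (D : 'M[algC]_N) : Prop :=
  exists d : 'rV[algC]_N, (forall i, `|d 0 i| = 1) /\ D = diag_mx d.

Definition enphased_perm (N : nat) (S : 'M[algC]_N) : Prop :=
  exists P D, is_perm_mx P /\ unitary_diag D /\ S = P *m D.

Definition Zshift (ns : seq nat) (N : nat) (k : 'I_N) : 'M[algC]_N :=
  \matrix_(i < N, j < N) ((j == addI ns i k)%:R).

Definition Zclass (ns : seq nat) (N : nat) (S : 'M[algC]_N) : Prop :=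
  exists D k, unitary_diag D /\ S = D *m Zshift ns k.

Definition act (N : nat) (p : 'M[algC]_N * 'M[algC]_N) (X : 'M[algC]_N) :=
  p.1 *m X *m invmx p.2.

Definition pairset (N : nat) := 'M[algC]_N * 'M[algC]_N -> Prop.

Definition MapP (N : nat) (F G : 'M[algC]_N) : pairset N :=
  fun p => enphased_perm p.1 /\ enphased_perm p.2 /\ act p F = G.

Definition MapS (N : nat) (F G : 'M[algC]_N) : pairset N :=
  fun p => is_perm_mx p.1 /\ is_perm_mx p.2 /\ act p F = G.

Definition StabZ (ns : seq nat) (N : nat) : pairset N :=
  fun p => Zclass ns p.1 /\ Zclass ns p.2 /\ act p (fourier ns N) = fourier ns N.

Definition pairset_mul (N : nat) (A B : pairset N) : pairset N :=
  fun p => exists a b, A a /\ B b /\ p = (a.1 *m b.1, a.2 *m b.2).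

Definition pairset_eq (N : nat) (A B : pairset N) : Prop := forall p, A p <-> B p.

Definition equivalent (N : nat) (F G : 'M[algC]_N) : Prop :=
  exists S T, enphased_perm S /\ enphased_perm T /\ G = S *m F *m invmx T.

Definition perm_equivalent (N : nat) (F G : 'M[algC]_N) : Prop :=
  exists P R, is_perm_mx P /\ is_perm_mx R /\ G = P *m F *m invmx R.

(* F is the character table of the finite abelian group I_F, realised on 0 .. N - 1
   through mixed-radix digits, with first row and column equal to 1.  If
   S F T^-1 = G with S = P_s D1 and T = P_t D2, comparing entries and normalising by
   the row and column through 0 eliminates the phases: G_ij = F(s i - s 0, t j - t 0).
   So the permutation parts, translated to fix 0, already map F to G, and what is left
   is a pair D Z_k stabilising F; the second factorisation follows by inverting.
   A permutation equivalence G_ij = F(s i, t j) makes s additive, because F is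
   multiplicative in each index and has distinct rows; conversely an isomorphism
   I_G ~ I_F turns the columns of F into characters of I_G, and by orthogonality every
   character of I_G is a column of G.  All this needs omega n to be a primitive n-th
   root of unity, which comes from the choice of n.-root (-1) as the root of largest
   real part in the closed upper half plane. *)

From Pilot Require Import Defs.
From HB Require Import structures.
From mathcomp Require Import all_boot all_order all_algebra all_fingroup all_field.
From mathcomp Require Import ring lra zify.
Import Order.TTheory GRing.Theory Num.Theory.
Local Open Scope ring_scope.

Set Implicit Arguments. Unset Strict Implicit. Unset Printing Implicit Defensive.

Local Notation prodn s := (\prod_(n <- s) n)%N.
Local Notation allpos s := (all (fun n => 0 < n)%N s).

(* (a, b) and (c, s) are unit vectors at angles alpha and theta in [0, pi); if rotating
   (a, b) by 2 theta either way does not increase its abscissa, then |alpha| <= theta. *)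
Lemma rotation_cos_le (R : realFieldType) (a b c s : R) :
  a ^+ 2 + b ^+ 2 = 1 -> c ^+ 2 + s ^+ 2 = 1 -> 0 <= s -> c < 1 ->
  a * (c ^+ 2 - s ^+ 2) - b * (2 * c * s) <= a ->
  a * (c ^+ 2 - s ^+ 2) + b * (2 * c * s) <= a -> c <= a.
Proof.
move=> ab1 cs1 s_ge0 c_lt1 le_cw le_ccw.
have [s0|s_neq0] := eqVneq s 0.
  have -> : c = -1 by subst s; nra.
  nra.
have s_gt0 : 0 < s by rewrite lt_def s_neq0.
have c2 : c ^+ 2 = 1 - s ^+ 2 by lra.
rewrite c2 in le_cw le_ccw.
have a_ge0 : 0 <= a by rewrite -(pmulr_lge0 _ (exprn_gt0 2 s_gt0)); lra.
have bc_le : `|b * c| <= a * s.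
  have : `|(b * c) * (2 * s)| <= a * (2 * s ^+ 2).
    by rewrite ler_norml; apply/andP; split; nra.
  by rewrite normrM (ger0_norm (_ : 0 <= 2 * s)); nra.
have : (b * c) ^+ 2 <= (a * s) ^+ 2.
  by rewrite -real_normK ?num_real // lerXn2r ?qualifE //= ?normr_ge0 //; nra.
nra.
Qed.

Lemma Re_lt1_unit_circle (y : algC) : `|y| = 1 -> y != 1 -> 'Re y < 1.
Proof.
move=> y1 y_neq1; rewrite lt_def.
have := leif_normC_Re_Creal y; rewrite y1 => -[le_Re1 _].
rewrite (le_trans (real_ler_norm (Creal_Re y))) // andbT.
apply: contra y_neq1 => /eqP Re_y1; apply/eqP; apply: eqC_semipolar.
- by rewrite normr1 y1.
- by rewrite -Re_y1 (Creal_ReP _ _) ?rpred1.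
- by rewrite (Creal_ImP 1 _) ?rpred1 // mulr0.
Qed.

Lemma Re_le_of_rotations (w y : algC) : `|w| = 1 -> `|y| = 1 ->
  0 <= 'Im y -> y != 1 ->
  'Re (w * y ^+ 2) <= 'Re w -> 'Re (w * y^* ^+ 2) <= 'Re w -> 'Re y <= 'Re w.
Proof.
move=> w1 y1 Im_y_ge0 y_neq1 le_cw le_ccw.
(* algC is not totally ordered, so the coordinates are moved to the real field algR. *)
pose a := in_algR (Creal_Re w); pose b := in_algR (Creal_Im w).
pose c := in_algR (Creal_Re y); pose s := in_algR (Creal_Im y).
have Re_wu2 (u : algC) :
    'Re (w * u ^+ 2) = 'Re w * ('Re u ^+ 2 - 'Im u ^+ 2) - 'Im w * (2 * 'Re u * 'Im u).
  by rewrite expr2 !(ReM, ImM); ring.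
have leE (x z : algR) : (x <= z) = (algRval x <= algRval z) by [].
have ltE (x z : algR) : (x < z) = (algRval x < algRval z) by [].
suff : c <= a by [].
apply: (@rotation_cos_le _ a b c s); rewrite ?leE ?ltE; try apply: val_inj;
  rewrite /= ?(rmorphB, rmorphD, rmorphM, rmorphXn, rmorph_nat, rmorph1) /=.
- by rewrite -normC2_Re_Im w1 expr1n.
- by rewrite -normC2_Re_Im y1 expr1n.
- exact: Im_y_ge0.
- exact: Re_lt1_unit_circle.
- by rewrite -Re_wu2.
- by move: le_ccw; rewrite Re_wu2 Re_conj Im_conj sqrrN !mulrN opprK.
Qed.

Lemma eq_or_conj_Re (C : numClosedFieldType) (w y : C) :
  `|w| = `|y| -> 'Re w = 'Re y -> w = y \/ w = y^*.
Proof.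
move=> eq_norm eq_Re; have : 'Im w * 'Im y \is Num.real by rewrite rpredM ?Creal_Im.
case/real_ge0P => [Im_ge0 | /ltW Im_le0]; first by left; apply: eqC_semipolar.
right; rewrite -[w]conjCK; congr _^*; apply: eqC_semipolar.
- by rewrite norm_conjC.
- by rewrite Re_conj.
- by rewrite Im_conj mulNr oppr_ge0.
Qed.

Lemma Re_le_rootC n (x w : algC) : (0 < n)%N -> x \is Num.real -> w ^+ n = x ->
  'Re w <= 'Re (n.-root x).
Proof.
move=> n_gt0 x_real wn_x; have : 'Im w \is Num.real by apply: Creal_Im.
case/real_ge0P => [Im_ge0 | /ltW Im_le0]; first exact: rootC_Re_max.
rewrite -Re_conj; apply: rootC_Re_max => //; last by rewrite Im_conj oppr_ge0.
by rewrite -rmorphXn wn_x; apply/CrealP.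
Qed.

Lemma rootCN1_eq_of_rotations n (w : algC) : (1 < n)%N -> w ^+ n = -1 ->
  'Re (w * n.-root (-1) ^+ 2) <= 'Re w -> 'Re (w * (n.-root (-1) ^+ 2)^*) <= 'Re w ->
  w = n.-root (-1) \/ w = (n.-root (-1))^*.
Proof.
move=> n_gt1 wn le_cw le_ccw; have n_gt0 := ltnW n_gt1; rewrite rmorphXn in le_ccw.
set y := n.-root (-1) in le_cw le_ccw *.
have yn : y ^+ n = -1 by apply: rootCK.
have y1 : `|y| = 1 by rewrite norm_rootC normrN1 rootC1.
have w1 : `|w| = 1.
  by apply/eqP; rewrite -(pexpr_eq1 n_gt0) ?normr_ge0 // -normrX wn normrN1.
apply: eq_or_conj_Re; first by rewrite w1 y1.
apply/eqP; rewrite eq_le Re_le_rootC ?rpredN1 //=.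
apply: Re_le_of_rotations => //; first exact: Im_rootC_ge0.
by apply/eqP => y_eq1; move/eqP: yn; rewrite y_eq1 expr1n eq_sym eqNr oner_eq0.
Qed.

Lemma coset_Re_max (u z : algC) m : (0 < m)%N -> z ^+ m = 1 ->
  exists k, forall j, 'Re (u * z ^+ j) <= 'Re (u * z ^+ k).
Proof.
move=> m_gt0 zm; have [k _ k_max] := @real_arg_maxP _ _ (Ordinal m_gt0) xpredT
  (fun k : 'I_m => 'Re (u * z ^+ k)) isT (fun _ _ => Creal_Re _).
by exists k => j; rewrite -(expr_mod j zm); apply: (k_max (Ordinal (ltn_pmod j m_gt0))).
Qed.

Lemma omega_primitive n : (0 < n)%N -> n.-primitive_root (omega n).
Proof.
move=> n_gt0; rewrite /omega; set y := n.-root (-1).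
have y1 : `|y| = 1 by rewrite norm_rootC normrN1 rootC1.
have y2n : (y ^+ 2) ^+ n = 1 by rewrite -exprM mulnC exprM rootCK // sqrrN expr1n.
have [m m_prim m_dvd] := prim_order_exists n_gt0 y2n.
suff <- : m = n by [].
have m_gt0 := prim_order_gt0 m_prim.
have y2m : (y ^+ 2) ^+ m = 1 by apply: prim_expr_order.
apply/eqP; rewrite eqn_leq (dvdn_leq n_gt0 m_dvd) leqNgt; apply/negP => lt_mn.
have n_gt1 : (1 < n)%N by apply: leq_ltn_trans lt_mn.
(* In the coset zeta <y ^+ 2> of n-th roots of -1
   take w of largest real part: neither neighbour w y^(+-2) beats it, so w is y or its
   conjugate, whence zeta ^+ (2 m) = w ^+ (2 m) = 1, contradicting the order 2 n. *)
have [zeta zeta_prim] : {zeta : algC | (2 * n).-primitive_root zeta}.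
  by apply: C_prim_root_exists; rewrite muln_gt0.
have zetan : zeta ^+ n = -1.
  have /eqP := prim_expr_order zeta_prim; rewrite mulnC exprM sqrf_eq1 => /orP[|/eqP //].
  by rewrite -(prim_order_dvd zeta_prim) => /(dvdn_leq n_gt0); rewrite leqNgt ltn_Pmull.
have [k k_max] := coset_Re_max zeta m_gt0 y2m.
set w := zeta * _ in k_max.
have wn : w ^+ n = -1 by rewrite exprMn zetan (exprAC (y ^+ 2)) y2n expr1n mulr1.
have conj_y2 : y^* ^+ 2 = (y ^+ 2) ^+ m.-1.
  apply: (mulIf (_ : y ^+ 2 != 0)); first by rewrite expf_neq0 // -normr_eq0 y1 oner_neq0.
  by rewrite -exprSr prednK // y2m -exprMn mulrC -normCK y1 !expr1n.
have w2m : (w ^+ 2) ^+ m = 1.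
  case: (rootCN1_eq_of_rotations n_gt1 wn) => [||->|->]; rewrite -?rmorphXn ?y2m ?rmorph1 //.
    by rewrite /w -mulrA -exprSr k_max.
  by rewrite rmorphXn -/y conj_y2 /w -mulrA -exprD k_max.
have wm : w ^+ m = zeta ^+ m by rewrite exprMn (exprAC (y ^+ 2)) y2m expr1n mulr1.
have /eqP : zeta ^+ (2 * m) = 1 by rewrite exprM -w2m (exprAC w) wm exprAC.
rewrite -(prim_order_dvd zeta_prim) dvdn_pmul2l // => /(dvdn_leq m_gt0).
by rewrite leqNgt lt_mn.
Qed.

Definition undigits (s : seq nat) (f : nat -> nat) : nat :=
  (\sum_(x < size s) f x * radix s x)%N.

Section Digits.
Implicit Types (s : seq nat) (a i j x : nat) (f : nat -> nat).

Lemma prod_seq_gt0 s : allpos s -> (0 < prodn s)%N.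
Proof.
elim: s => [|a s IHs]; rewrite ?big_nil ?big_cons //= => /andP[a_gt0 /IHs].
by rewrite muln_gt0 a_gt0.
Qed.

Lemma nth_allpos s x : allpos s -> (0 < nth 1 s x)%N.
Proof.
move=> s_pos; have [x_lt | x_ge] := ltnP x (size s); last by rewrite nth_default.
by move/allP: s_pos; apply; rewrite mem_nth.
Qed.

Lemma radix_cons0 a s : radix (a :: s) 0 = prodn s.
Proof. by rewrite /radix big_add1 [RHS](big_nth 1). Qed.

Lemma radix_consS a s x : radix (a :: s) x.+1 = radix s x.
Proof. by rewrite /radix big_add1. Qed.

Lemma digit_cons0 a s i : digit (a :: s) i 0 = (i %/ prodn s %% a)%N.
Proof. by rewrite /digit radix_cons0. Qed.

Lemma digit_consS a s i x : digit (a :: s) i x.+1 = digit s i x.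
Proof. by rewrite /digit radix_consS. Qed.

Lemma digit_default s i x : (size s <= x)%N -> digit s i x = 0%N.
Proof. by move=> x_ge; rewrite /digit nth_default ?modn1. Qed.

Lemma ltn_digit s i x : allpos s -> (digit s i x < nth 1 s x)%N.
Proof. by move=> s_pos; rewrite ltn_pmod ?nth_allpos. Qed.

Lemma digitMDl s k i x : allpos s -> digit s (k * prodn s + i) x = digit s i x.
Proof.
elim: s k i x => [|a s IHs] k i x; first by rewrite !digit_default.
case/andP=> a_gt0 s_pos; case: x => [|x]; last by rewrite !digit_consS big_cons mulnA IHs.
by rewrite !digit_cons0 big_cons mulnA divnMDl ?prod_seq_gt0 // modnMDl.
Qed.

Lemma undigits_cons a s f :
  undigits (a :: s) f = (f 0 * prodn s + undigits s (fun x => f x.+1))%N.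
Proof.
rewrite /undigits big_ord_recl radix_cons0; congr (_ + _)%N.
by apply: eq_bigr => x _; rewrite radix_consS.
Qed.

Lemma eq_undigits s f g :
  (forall x, (x < size s)%N -> f x = g x) -> undigits s f = undigits s g.
Proof. by move=> eq_fg; apply: eq_bigr => x _; rewrite eq_fg. Qed.

Definition digits_bounded s f := forall x, (x < size s)%N -> (f x < nth 1 s x)%N.

Lemma undigits_lt s f : allpos s -> digits_bounded s f -> (undigits s f < prodn s)%N.
Proof.
elim: s f => [|a s IHs] f; first by rewrite /undigits big_ord0 big_nil.
case/andP=> a_gt0 s_pos f_lt; rewrite undigits_cons big_cons.
have f0_lt : (f 0 < a)%N by apply: (f_lt 0%N).
have : (undigits s (fun x => f x.+1) < prodn s)%N by apply: IHs => // x; apply: (f_lt x.+1).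
move=> IH; apply: leq_trans (_ : (f 0).+1 * prodn s <= a * prodn s)%N.
  by rewrite mulSn; lia.
by rewrite leq_mul2r f0_lt orbT.
Qed.

Lemma digit_undigits s f x : allpos s -> digits_bounded s f -> (x < size s)%N ->
  digit s (undigits s f) x = f x.
Proof.
elim: s f x => [|a s IHs] f x //; case/andP=> a_gt0 s_pos f_lt x_lt.
have f_lt' : digits_bounded s (fun x => f x.+1) by move=> y; apply: (f_lt y.+1).
rewrite undigits_cons; case: x x_lt => [|x] x_lt; last by rewrite digit_consS digitMDl ?IHs.
rewrite digit_cons0 divnMDl ?prod_seq_gt0 // divn_small ?undigits_lt // addn0.
by rewrite modn_small //; apply: (f_lt 0%N).
Qed.

Lemma undigits_digit s i : allpos s -> (i < prodn s)%N -> undigits s (digit s i) = i.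
Proof.
elim: s i => [|a s IHs] i.
  by rewrite big_nil ltnS leqn0 => _ /eqP ->; rewrite /undigits big_ord0.
case/andP=> a_gt0 s_pos i_lt; rewrite undigits_cons digit_cons0.
rewrite big_cons in i_lt; rewrite modn_small; last by rewrite ltn_divLR ?prod_seq_gt0 // mulnC.
rewrite (@eq_undigits _ _ (digit s (i %% prodn s))); last first.
  by move=> x _; rewrite digit_consS {1}(divn_eq i (prodn s)) digitMDl.
by rewrite IHs ?ltn_pmod ?prod_seq_gt0 // -divn_eq.
Qed.

Lemma digit_inj s i j : allpos s -> (i < prodn s)%N -> (j < prodn s)%N ->
  (forall x, (x < size s)%N -> digit s i x = digit s j x) -> i = j.
Proof.
move=> s_pos i_lt j_lt eq_ij.
by rewrite -(undigits_digit s_pos i_lt) -(undigits_digit s_pos j_lt) (eq_undigits eq_ij).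
Qed.

End Digits.

Definition oppI (ns : seq nat) (N : nat) (i : 'I_N) : 'I_N :=
  insubd i (undigits ns (fun x => (nth 1 ns x - digit ns i x) %% nth 1 ns x)%N).

(* The generator of the x-th cyclic factor (the index 0 if that factor is trivial). *)
Definition basisI (ns : seq nat) (n x : nat) : 'I_n.+1 :=
  insubd ord0 (undigits ns (fun y => (y == x) && (1 < nth 1 ns y)%N : nat)).

Lemma digit0 s x : digit s 0 x = 0%N.
Proof. by rewrite /digit div0n mod0n. Qed.

Section CharacterTable.
Variables (ns : seq nat) (n : nat).
Hypotheses (ns_pos : allpos ns) (ns_prod : prodn ns = n.+1).
Implicit Types (i j k : 'I_n.+1) (x : nat).

Local Notation nth_ns x := (nth 1 ns x).
Local Notation add := (@addI ns n.+1).
Local Notation opp := (@oppI ns n.+1).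

Lemma undigits_insubd i f :
  digits_bounded ns f -> val (insubd i (undigits ns f)) = undigits ns f.
Proof. by move=> f_lt; rewrite insubdK // -topredE /= -ns_prod undigits_lt. Qed.

Lemma digit_insubd i f x : digits_bounded ns f -> (x < size ns)%N ->
  digit ns (insubd i (undigits ns f)) x = f x.
Proof. by move=> f_lt x_lt; rewrite undigits_insubd // digit_undigits. Qed.

Lemma mod_digits_bounded f : digits_bounded ns (fun x => f x %% nth_ns x)%N.
Proof. by move=> x _; rewrite ltn_pmod ?nth_allpos. Qed.

Lemma addIE i j :
  add i j = insubd i (undigits ns (fun x => (digit ns i x + digit ns j x) %% nth_ns x)%N).
Proof. by []. Qed.

Lemma digit_addI i j x : (x < size ns)%N ->
  digit ns (add i j) x = ((digit ns i x + digit ns j x) %% nth_ns x)%N.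
Proof.
by move=> x_lt; rewrite addIE digit_insubd //; apply: (mod_digits_bounded (fun x => _ + _)%N).
Qed.

Lemma digit_oppI i x : (x < size ns)%N ->
  digit ns (opp i) x = ((nth_ns x - digit ns i x) %% nth_ns x)%N.
Proof.
by move=> x_lt; rewrite digit_insubd //; apply: (mod_digits_bounded (fun x => _ - _)%N).
Qed.

Lemma ord_digitP i j : (forall x, (x < size ns)%N -> digit ns i x = digit ns j x) -> i = j.
Proof.
by move=> eq_ij; apply: val_inj; apply: (digit_inj ns_pos); rewrite ?ns_prod ?ltn_ord.
Qed.

Lemma addIC : commutative add.
Proof. by move=> i j; apply: ord_digitP => x x_lt; rewrite !digit_addI // addnC. Qed.

Lemma addIA : associative add.
Proof.
by move=> i j k; apply: ord_digitP => x x_lt; rewrite !digit_addI // modnDml modnDmr addnA.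
Qed.

Lemma add0I : left_id ord0 add.
Proof.
move=> i; apply: ord_digitP => x x_lt.
by rewrite digit_addI // digit0 modn_small ?ltn_digit.
Qed.

Lemma addI0 : right_id ord0 add.
Proof. by move=> i; rewrite addIC add0I. Qed.

Lemma addNI i : add (opp i) i = ord0.
Proof.
apply: ord_digitP => x x_lt; rewrite digit_addI // digit_oppI // digit0.
by rewrite modnDml subnK ?modnn // ltnW ?ltn_digit.
Qed.

Lemma addIN i : add i (opp i) = ord0.
Proof. by rewrite addIC addNI. Qed.

Lemma addIK k : cancel (add^~ k) (add^~ (opp k)).
Proof. by move=> i; rewrite -addIA addIN addI0. Qed.

Lemma addIr_inj k : injective (add^~ k).
Proof. exact: can_inj (addIK k). Qed.

Definition shiftI k : {perm 'I_n.+1} := perm (@addIr_inj k).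

Lemma shiftIE k i : shiftI k i = add i k.
Proof. by rewrite permE. Qed.

Lemma shiftIV k : ((shiftI k)^-1 = shiftI (opp k))%g.
Proof.
by apply/eqP; rewrite eq_invg_mul; apply/eqP/permP => i; rewrite permM !shiftIE perm1 addIK.
Qed.

Lemma Zshift_perm k : Zshift ns k = perm_mx (shiftI k).
Proof. by apply/matrixP => i j; rewrite !mxE shiftIE eq_sym. Qed.

Local Notation F := (fourier ns n.+1).

Lemma fourier_sym i j : F i j = F j i.
Proof. by rewrite !mxE; apply: eq_bigr => x _; rewrite mulnC. Qed.

Lemma fourier0l j : F ord0 j = 1.
Proof. by rewrite mxE big1 // => x _; rewrite digit0 mul0n expr0. Qed.

Lemma fourier0r i : F i ord0 = 1.
Proof. by rewrite fourier_sym fourier0l. Qed.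

Lemma fourierDl i k j : F (add i k) j = F i j * F k j.
Proof.
rewrite !mxE -big_split; apply: eq_bigr => x _ /=.
have omega_prim := omega_primitive (nth_allpos x ns_pos).
by rewrite digit_addI // -exprD -mulnDl -(prim_expr_mod omega_prim) modnMml prim_expr_mod.
Qed.

Lemma fourierDr i j k : F i (add j k) = F i j * F i k.
Proof. by rewrite fourier_sym fourierDl !(fourier_sym i). Qed.

Lemma fourierNl_mul i j : F (opp i) j * F i j = 1.
Proof. by rewrite -fourierDl addNI fourier0l. Qed.

Lemma fourier_neq0 i j : F i j != 0.
Proof. by apply: contra_eq_neq (fourierNl_mul i j) => ->; rewrite mulr0 eq_sym oner_neq0. Qed.

Lemma fourierNl i j : F (opp i) j = (F i j)^-1.
Proof. by apply: (mulIf (fourier_neq0 i j)); rewrite fourierNl_mul mulVf ?fourier_neq0. Qed.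

Lemma fourierNr i j : F i (opp j) = (F i j)^-1.
Proof. by rewrite fourier_sym fourierNl fourier_sym. Qed.

Lemma basisI_bounded x : digits_bounded ns (fun y => (y == x) && (1 < nth_ns y)%N : nat).
Proof. by move=> y _; case: (_ && _) / andP => [[_ ?] | _] //; apply: nth_allpos. Qed.

Lemma digit_basisI x y : (y < size ns)%N ->
  digit ns (basisI ns n x) y = ((y == x) && (1 < nth_ns y)%N : nat).
Proof. exact/digit_insubd/basisI_bounded. Qed.

Lemma fourier_basisI i x : (x < size ns)%N -> (1 < nth_ns x)%N ->
  F i (basisI ns n x) = omega (nth_ns x) ^+ digit ns i x.
Proof.
move=> x_lt nth_gt1; rewrite mxE (bigD1 (Ordinal x_lt)) //= big1 ?mulr1 => [|y y_neq_x].
  by rewrite digit_basisI // eqxx nth_gt1 muln1.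
by move: y_neq_x; rewrite -val_eqE digit_basisI // => /negbTE ->; rewrite muln0.
Qed.

Lemma fourier_row_inj i j : F i =1 F j -> i = j.
Proof.
move=> eq_rows; apply: ord_digitP => x x_lt.
have [nth_gt1 | nth_le1] := ltnP 1 (nth_ns x); last first.
  have nth1 : nth_ns x = 1%N by apply/eqP; rewrite eqn_leq nth_le1 nth_allpos.
  have := ltn_digit i x ns_pos; have := ltn_digit j x ns_pos.
  by rewrite nth1 !ltnS !leqn0 => /eqP-> /eqP->.
have := eq_rows (basisI ns n x); rewrite !fourier_basisI // => /eqP.
rewrite (eq_prim_root_expr (omega_primitive (nth_allpos x ns_pos))) => /eqP.
by rewrite !modn_small ?ltn_digit.
Qed.

Definition character (psi : 'I_n.+1 -> algC) := forall i j, psi (add i j) = psi i * psi j.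

Lemma sum_character_eq0 psi k : character psi -> psi k != 1 -> \sum_i psi i = 0.
Proof.
move=> psi_char psik_neq1.
have sum_psiM : \sum_i psi i = (\sum_i psi i) * psi k.
  rewrite [LHS](reindex_inj (@addIr_inj k)) mulr_suml.
  by apply: eq_bigr => i _; rewrite psi_char.
apply/eqP; move: psik_neq1; apply: contraR => sum_neq0.
by rewrite -(can_eq (mulKf sum_neq0)) -sum_psiM mulr1.
Qed.

Lemma fourier_character i : character (F i).
Proof. by move=> j k; apply: fourierDr. Qed.

Lemma sum_fourier_row i : \sum_j F i j = (i == ord0)%:R * n.+1%:R.
Proof.
have [-> | i_neq0] := eqVneq i ord0.
  by rewrite (eq_bigr (fun _ => 1)) => [|j _]; rewrite ?fourier0l // sumr_const card_ord mul1r.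
have [k Fik_neq1] : exists k, F i k != 1.
  apply/existsP; apply: contraR i_neq0 => /existsPn Fi1; apply/eqP/fourier_row_inj => j.
  by rewrite fourier0l; apply/eqP; rewrite -[_ == _]negbK Fi1.
by rewrite (sum_character_eq0 (fourier_character i) Fik_neq1) mul0r.
Qed.

Lemma oppI_eq0 i : (opp i == ord0) = (i == ord0).
Proof.
apply/eqP/eqP => [opp_i0 | ->]; first by rewrite -[i]addI0 -opp_i0 addIN.
by rewrite -[opp _]add0I addIN.
Qed.

(* If psi is no column of F, each psi / F(., c) is a nontrivial character with zero sum;
   summing these sums over c instead collapses, by orthogonality of the rows, to psi 0 * N. *)
Lemma character_fourier_col psi : character psi -> (forall i, psi i != 0) ->
  exists c, psi =1 F^~ c.
Proof.
move=> psi_char psi_neq0.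
have [/existsP[c /forallP psi_c] | /existsPn no_col] :=
  boolP [exists c, [forall i, psi i == F i c]]; first by exists c => i; apply/eqP.
have sum_eq0 c : \sum_i psi i * F i (opp c) = 0.
  have /forallPn[i psi_i_neq] := no_col c.
  apply: (@sum_character_eq0 _ i) => [j k | ]; first by rewrite psi_char fourierDl; ring.
  apply: contra psi_i_neq; rewrite fourierNr => /eqP psi_div.
  by apply/eqP; rewrite -(divfK (fourier_neq0 i c) (psi i)) psi_div mul1r.
have : \sum_c \sum_i psi i * F i (opp c) = 0 by rewrite big1.
rewrite exchange_big /=.
under eq_bigr => i _ do rewrite -mulr_sumr (eq_bigr _ (fun c _ => fourierNr i c)).
under eq_bigr => i _ do rewrite -(eq_bigr _ (fun c _ => fourierNl i c)) sum_fourier_row oppI_eq0.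
rewrite (bigD1 ord0) //= big1 ?addr0 => [|i /negbTE->]; last by rewrite !mul0r mulr0.
by move/eqP; rewrite mul1r mulf_eq0 (negbTE (psi_neq0 _)) pnatr_eq0.
Qed.

End CharacterTable.

Section PhaseMatrices.
Variable n : nat.
Implicit Types (A B : 'M[algC]_n) (s : {perm 'I_n}) (d e : 'rV[algC]_n).

Definition phase_row d := forall i, `|d 0 i| = 1.

Lemma phase_row_neq0 d i : phase_row d -> d 0 i != 0.
Proof. by move=> d_phase; rewrite -normr_eq0 d_phase oner_neq0. Qed.

Lemma phase_rowM d e : phase_row d -> phase_row e -> phase_row (\row_j (d 0 j * e 0 j)).
Proof. by move=> d_phase e_phase i; rewrite mxE normrM d_phase e_phase mulr1. Qed.

Lemma phase_rowV d : phase_row d -> phase_row (\row_j (d 0 j)^-1).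
Proof. by move=> d_phase i; rewrite mxE normfV d_phase invr1. Qed.

Lemma phase_row_perm d s : phase_row d -> phase_row (\row_j d 0 (s j)).
Proof. by move=> d_phase i; rewrite mxE d_phase. Qed.

Lemma invmx_eq A B : A *m B = 1%:M -> invmx A = B.
Proof.
move=> AB1; have [A_unit _] := mulmx1_unit AB1.
by rewrite -[invmx A]mulmx1 -AB1 mulmxA mulVmx // mul1mx.
Qed.

Lemma invmxM A B : A \in unitmx -> B \in unitmx -> invmx (A *m B) = invmx B *m invmx A.
Proof.
by move=> A_unit B_unit; apply: invmx_eq; rewrite mulmxA mulmxK // mulmxV.
Qed.

Lemma invmx_perm s : invmx (perm_mx s : 'M[algC]_n) = perm_mx s^-1.
Proof. by apply: invmx_eq; rewrite -perm_mxM mulgV perm_mx1. Qed.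

Lemma diag_mxV d : phase_row d -> diag_mx d *m diag_mx (\row_j (d 0 j)^-1) = 1%:M.
Proof.
move=> d_phase; rewrite mulmx_diag; apply/matrixP => i j; rewrite !mxE.
by case: eqP => [-> | _]; rewrite ?divff ?phase_row_neq0 ?mulr0.
Qed.

Lemma diag_mx_unit d : phase_row d -> diag_mx d \in unitmx.
Proof. by move/diag_mxV/mulmx1_unit => []. Qed.

Lemma invmx_diag d : phase_row d -> invmx (diag_mx d) = diag_mx (\row_j (d 0 j)^-1).
Proof. by move/diag_mxV/invmx_eq. Qed.

Lemma perm_mx_diag s d : perm_mx s *m diag_mx d = diag_mx (\row_i d 0 (s i)) *m perm_mx s.
Proof.
rewrite -row_permE mul_diag_mx; apply/matrixP => i j; rewrite !mxE.
by rewrite mulr_natr.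
Qed.

Lemma diag_perm_mx d s :
  diag_mx d *m perm_mx s = perm_mx s *m diag_mx (\row_i d 0 ((s^-1)%g i)).
Proof.
rewrite perm_mx_diag; congr (diag_mx _ *m _).
by apply/rowP => i; rewrite !mxE permK.
Qed.

Lemma enphased_permP A :
  enphased_perm A <-> exists s d, phase_row d /\ A = perm_mx s *m diag_mx d.
Proof.
split => [[_ [_ [/is_perm_mxP[s ->] [[d [d_phase ->]] ->]]]] | [s [d [d_phase ->]]]].
  by exists s, d.
by exists (perm_mx s), (diag_mx d); do !split; [apply: perm_mx_is_perm | exists d].
Qed.

Lemma enphased_perm_unit A : enphased_perm A -> A \in unitmx.
Proof.
case/enphased_permP => s [d [d_phase ->]].
by rewrite unitmx_mul unitmx_perm diag_mx_unit.
Qed.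

Lemma enphased_perm_mx s d : phase_row d -> enphased_perm (perm_mx s *m diag_mx d).
Proof. by move=> d_phase; apply/enphased_permP; exists s, d. Qed.

Lemma enphased_permM A B : enphased_perm A -> enphased_perm B -> enphased_perm (A *m B).
Proof.
case/enphased_permP => s [d [d_phase ->]]; case/enphased_permP => t [e [e_phase ->]].
rewrite mulmxA -(mulmxA _ (diag_mx d)) diag_perm_mx mulmxA -perm_mxM -mulmxA mulmx_diag.
by apply: enphased_perm_mx; apply: phase_rowM => //; apply: phase_row_perm.
Qed.

Lemma enphased_permV A : enphased_perm A -> enphased_perm (invmx A).
Proof.
case/enphased_permP => s [d [d_phase ->]].
rewrite invmxM ?unitmx_perm ?diag_mx_unit // invmx_diag // invmx_perm diag_perm_mx.
by apply: enphased_perm_mx; apply/phase_row_perm/phase_rowV.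
Qed.

Lemma perm_enphased (P : 'M[algC]_n) : is_perm_mx P -> enphased_perm P.
Proof.
case/is_perm_mxP => s ->; rewrite -[perm_mx s]mulmx1.
have -> : 1%:M = diag_mx (\row_(i < n) (1 : algC)) by apply/matrixP => i j; rewrite !mxE.
by apply: enphased_perm_mx => i; rewrite mxE normr1.
Qed.

End PhaseMatrices.

Section Action.
Variable n : nat.
Implicit Types (p q : 'M[algC]_n * 'M[algC]_n) (X : 'M[algC]_n).
Implicit Types (s t : {perm 'I_n}).

Lemma pair_actM p q X : p.2 \in unitmx -> q.2 \in unitmx ->
  Defs.act (p.1 *m q.1, p.2 *m q.2) X = Defs.act p (Defs.act q X).
Proof. by move=> p2_unit q2_unit; rewrite /Defs.act /= invmxM // !mulmxA. Qed.

Lemma pair_actK p : p.1 \in unitmx -> p.2 \in unitmx ->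
  cancel (Defs.act p) (Defs.act (invmx p.1, invmx p.2)).
Proof.
move=> p1_unit p2_unit X.
by rewrite /Defs.act /= invmxK !mulmxA mulVmx // mul1mx mulmxKV.
Qed.

Lemma pair_act_perm s t X :
  Defs.act (perm_mx s, perm_mx t) X = \matrix_(i, j) X (s i) (t j).
Proof.
rewrite /Defs.act /= invmx_perm -row_permE -col_permE.
by apply/matrixP => i j; rewrite !mxE.
Qed.

Lemma is_perm_mx_inv (P : 'M[algC]_n) : is_perm_mx P -> is_perm_mx (invmx P).
Proof. by case/is_perm_mxP => s ->; rewrite invmx_perm perm_mx_is_perm. Qed.

Lemma MapP_inv (X Y : 'M[algC]_n) p : MapP X Y p -> MapP Y X (invmx p.1, invmx p.2).
Proof.
case=> S_enph [T_enph act_Y]; split; [exact: enphased_permV | split; [exact: enphased_permV |]].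
by rewrite -act_Y (@pair_actK p) ?enphased_perm_unit.
Qed.

End Action.

Section FourierMaps.
Variables (ns : seq nat) (n : nat).
Hypotheses (ns_pos : allpos ns) (ns_prod : prodn ns = n.+1).

Local Notation F := (fourier ns n.+1).
Local Notation add := (@addI ns n.+1).
Local Notation opp := (@oppI ns n.+1).
Local Notation shift := (shiftI ns_pos ns_prod).
Implicit Types (d : 'rV[algC]_n.+1) (k : 'I_n.+1) (S : 'M[algC]_n.+1).

Lemma Zclass_mx d k : phase_row d -> Zclass ns (diag_mx d *m Zshift ns k).
Proof. by move=> d_phase; exists (diag_mx d), k; split => //; exists d. Qed.

Lemma Zclass_enphased S : Zclass ns S -> enphased_perm S.
Proof.
case=> _ [k [[d [d_phase ->]] ->]]; rewrite (Zshift_perm ns_pos ns_prod) diag_perm_mx.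
by apply/enphased_perm_mx/phase_row_perm.
Qed.

Lemma ZclassV S : Zclass ns S -> Zclass ns (invmx S).
Proof.
case=> _ [k [[d [d_phase ->]] ->]]; rewrite (Zshift_perm ns_pos ns_prod).
rewrite invmxM ?unitmx_perm ?diag_mx_unit // invmx_perm invmx_diag //.
rewrite (shiftIV ns_pos ns_prod) perm_mx_diag.
by rewrite -(Zshift_perm ns_pos ns_prod); apply/Zclass_mx/phase_row_perm/phase_rowV.
Qed.

Lemma StabZ_enphased (p : 'M[algC]_n.+1 * 'M[algC]_n.+1) :
  @StabZ ns n.+1 p -> enphased_perm p.1 /\ enphased_perm p.2.
Proof. by case=> /Zclass_enphased ? [/Zclass_enphased ? _]. Qed.

Definition anchor (s : {perm 'I_n.+1}) : {perm 'I_n.+1} := (s * shift (opp (s ord0)))%g.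

Lemma anchorE s i : anchor s i = add (s i) (opp (s ord0)).
Proof. by rewrite permM shiftIE. Qed.

Lemma perm_anchor s :
  perm_mx (anchor s) *m perm_mx (shift (s ord0)) = perm_mx s :> 'M[algC]_n.+1.
Proof. by rewrite -perm_mxM -mulgA -shiftIV mulVg mulg1. Qed.

Lemma fourier_translate a b r c :
  F (add a (opp r)) (add b (opp c)) = F a b * F r c / (F a c * F r b).
Proof.
rewrite !(fourierDl ns_pos ns_prod, fourierDr ns_pos ns_prod).
by rewrite !(fourierNl ns_pos ns_prod, fourierNr ns_pos ns_prod) invrK invfM; ring.
Qed.

End FourierMaps.

Section FourierEquivalence.
Variables (ns ms : seq nat) (n : nat).
Hypotheses (ns_pos : allpos ns) (ns_prod : prodn ns = n.+1).
Hypotheses (ms_pos : allpos ms) (ms_prod : prodn ms = n.+1).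

Local Notation F := (fourier ns n.+1).
Local Notation G := (fourier ms n.+1).
Local Notation anchor := (anchor ns_pos ns_prod).

(* Row and column 0 of F and G consist of ones, so the entries through 0 express the
   phases d1, d2 in terms of F alone, and they cancel from all other entries. *)
Lemma enphased_fourier_entries s t d1 d2 : phase_row d1 -> phase_row d2 ->
  Defs.act (perm_mx s *m diag_mx d1, perm_mx t *m diag_mx d2) F = G ->
  G = Defs.act (perm_mx (anchor s), perm_mx (anchor t)) F.
Proof.
move=> d1_phase d2_phase act_SF_G.
have SF_GT : perm_mx s *m diag_mx d1 *m F = G *m (perm_mx t *m diag_mx d2).
  by rewrite -act_SF_G /Defs.act /= mulmxKV // unitmx_mul unitmx_perm diag_mx_unit.
have entry i j : d1 0 (s i) * F (s i) (t j) = G i j * d2 0 (t j).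
  have := congr1 (fun M : 'M[algC]_n.+1 => M i (t j)) SF_GT.
  rewrite /= -mulmxA -row_permE mul_diag_mx mulmxA mul_mx_diag.
  by rewrite -[t in perm_mx t]invgK -col_permE !mxE permK.
rewrite pair_act_perm; apply/matrixP => i j.
rewrite mxE !anchorE (fourier_translate ns_pos ns_prod).
have := entry ord0 j; have := entry i ord0; have := entry ord0 ord0.
rewrite !(fourier0l, fourier0r) !mul1r => e00 ei0 e0j.
apply: (mulIf (phase_row_neq0 (t j) d2_phase)); rewrite -entry -e0j.
have F_neq0 := fourier_neq0 ns_pos ns_prod.
have -> : d1 0 (s i) = d1 0 (s ord0) * F (s ord0) (t ord0) / F (s i) (t ord0).
  by apply: (mulIf (F_neq0 (s i) (t ord0))); rewrite divfK // ei0 e00.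
by field; rewrite !F_neq0.
Qed.

Lemma MapP_factor p : MapP F G p -> pairset_mul (MapS F G) (@StabZ ns n.+1) p.
Proof.
case: p => S T [/= /enphased_permP[s [d1 [d1_phase ->]]]].
case=> /= /enphased_permP[t [d2 [d2_phase ->]]] act_G.
have G_aF := enphased_fourier_entries d1_phase d2_phase act_G.
pose a : 'M[algC]_n.+1 * 'M[algC]_n.+1 := (perm_mx (anchor s), perm_mx (anchor t)).
pose Zpart (u : {perm 'I_n.+1}) (d : 'rV[algC]_n.+1) :=
  diag_mx (\row_i d 0 (shiftI ns_pos ns_prod (u ord0) i)) *m Zshift ns (u ord0).
have aZ u (d : 'rV[algC]_n.+1) : perm_mx (anchor u) *m Zpart u d = perm_mx u *m diag_mx d.
  by rewrite /Zpart (Zshift_perm ns_pos ns_prod) -perm_mx_diag mulmxA perm_anchor.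
have Zpart_Z u (d : 'rV[algC]_n.+1) : phase_row d -> Zclass ns (Zpart u d).
  by move=> d_phase; apply/Zclass_mx/phase_row_perm.
exists a, (Zpart s d1, Zpart t d2); split; last split; last by rewrite /= !aZ.
split; [exact: perm_mx_is_perm | split; [exact: perm_mx_is_perm | exact/esym]].
split; [exact: Zpart_Z | split; [exact: Zpart_Z |]].
have act_a_inj : injective (Defs.act a) by apply/can_inj/pair_actK; apply: unitmx_perm.
apply: act_a_inj; rewrite -G_aF -pair_actM /= ?aZ ?unitmx_perm //.
exact/enphased_perm_unit/Zclass_enphased/Zpart_Z.
Qed.

Lemma MapP_MapS_StabZ : pairset_eq (MapP F G) (pairset_mul (MapS F G) (@StabZ ns n.+1)).
Proof.
move=> p; split; first exact: MapP_factor.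
case=> a [b [[a1_perm [a2_perm act_a]] [b_stab ->]]].
have [b1_enph b2_enph] := StabZ_enphased ns_pos ns_prod b_stab.
split; [|split]; try by apply: enphased_permM => //; apply: perm_enphased.
have a2_unit : a.2 \in unitmx by apply/enphased_perm_unit/perm_enphased.
by rewrite (pair_actM _ a2_unit (enphased_perm_unit b2_enph)) b_stab.2.2.
Qed.

End FourierEquivalence.

Section FourierEquivalenceTheorems.
Variables (ns ms : seq nat) (n : nat).
Hypotheses (ns_pos : allpos ns) (ns_prod : prodn ns = n.+1).
Hypotheses (ms_pos : allpos ms) (ms_prod : prodn ms = n.+1).

Local Notation F := (fourier ns n.+1).
Local Notation G := (fourier ms n.+1).
Implicit Types (p : 'M[algC]_n.+1 * 'M[algC]_n.+1).

Lemma MapP_StabZ_MapS : pairset_eq (MapP F G) (pairset_mul (@StabZ ms n.+1) (MapS F G)).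
Proof.
move=> p; split => [p_map | [b [a [b_stab [[a1_perm [a2_perm act_a]] ->]]]]].
  have [a [b [[a1_perm [a2_perm act_a]] [b_stab pV]]]] :=
    MapP_factor ms_pos ms_prod (MapP_inv p_map).
  have [b1_enph b2_enph] := StabZ_enphased ms_pos ms_prod b_stab.
  have [a1_unit a2_unit] : a.1 \in unitmx /\ a.2 \in unitmx.
    by split; apply/enphased_perm_unit/perm_enphased.
  have [b1_unit b2_unit] := conj (enphased_perm_unit b1_enph) (enphased_perm_unit b2_enph).
  exists (invmx b.1, invmx b.2), (invmx a.1, invmx a.2); split; [|split].
  - split; [exact (ZclassV ms_pos ms_prod b_stab.1) | split].
      exact (ZclassV ms_pos ms_prod b_stab.2.1).
    by rewrite -{1}b_stab.2.2 (@pair_actK _ b).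
  - split; [exact: is_perm_mx_inv | split; [exact: is_perm_mx_inv |]].
    by rewrite -act_a (@pair_actK _ a).
  case: pV => pV1 pV2; rewrite -!invmxM // -pV1 -pV2 !invmxK.
  by case: (p).
have [b1_enph b2_enph] := StabZ_enphased ms_pos ms_prod b_stab.
have a2_unit : a.2 \in unitmx by apply/enphased_perm_unit/perm_enphased.
split; [|split]; try by apply: enphased_permM => //; apply: perm_enphased.
by rewrite (pair_actM _ (enphased_perm_unit b2_enph) a2_unit) act_a b_stab.2.2.
Qed.

Lemma equivalent_perm_equivalent : equivalent F G <-> perm_equivalent F G.
Proof.
split=> [[S [T [S_enph [T_enph G_SFT]]]] | [P [R [P_perm [R_perm G_PFR]]]]].
  have [a [_ [[a1_perm [a2_perm act_a]] _]]] :=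
    MapP_factor ns_pos ns_prod (conj S_enph (conj T_enph (esym G_SFT)) : MapP F G (S, T)).
  by exists a.1, a.2; do !split => //; rewrite -act_a.
by exists P, R; do !split => //; apply: perm_enphased.
Qed.

Lemma perm_equivalent_index_iso : perm_equivalent F G -> index_groups_iso ns ms n.+1.
Proof.
case=> _ [_ [/is_perm_mxP[s ->] [/is_perm_mxP[t ->]]]].
rewrite -/(Defs.act (perm_mx s, perm_mx t) F) pair_act_perm => G_sFt.
have Gst i j : G i j = F (s i) (t j) by rewrite G_sFt mxE.
have s_hom i i' : s (addI ms i i') = addI ns (s i) (s i').
  apply: (fourier_row_inj ns_pos ns_prod) => j; rewrite -[j](permKV t) -Gst.
  by rewrite (fourierDl ms_pos ms_prod) !Gst (fourierDl ns_pos ns_prod).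
exists (s^-1)%g; split; first by exists s => i; rewrite ?permK ?permKV.
by move=> i j; apply: (@perm_inj _ s); rewrite s_hom !permKV.
Qed.

Lemma index_iso_perm_equivalent : index_groups_iso ns ms n.+1 -> perm_equivalent F G.
Proof.
case=> phi [[phiV phiK phiVK] phi_hom].
have phiV_hom g h : phiV (addI ms g h) = addI ns (phiV g) (phiV h).
  by rewrite -[g]phiVK -[h]phiVK -phi_hom !phiK.
have col j : exists c, (fun g => F (phiV g) j) =1 G^~ c.
  apply: (character_fourier_col ms_pos ms_prod) => [g h | g] /=.
    by rewrite phiV_hom (fourierDl ns_pos ns_prod).
  exact: (fourier_neq0 ns_pos ns_prod).
have [tau tauE] := fin_all_exists col.
have tau_inj : injective tau.
  move=> j1 j2 tau_eq; apply: (fourier_row_inj ns_pos ns_prod) => i.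
  by rewrite fourier_sym [RHS]fourier_sym -[i]phiK !tauE tau_eq.
exists (perm_mx (perm (can_inj phiVK))), (perm_mx ((perm tau_inj)^-1)%g).
split; [exact: perm_mx_is_perm | split; [exact: perm_mx_is_perm |]].
rewrite -/(Defs.act (_, _) F) pair_act_perm; apply/matrixP => i j.
by rewrite mxE permE tauE -[tau _](permE tau_inj) permKV.
Qed.

End FourierEquivalenceTheorems.

Theorem lemma4p22 (N : nat) (ns ms : seq nat) :
  all (fun n => 0 < n)%N ns -> all (fun n => 0 < n)%N ms ->
  (\prod_(n <- ns) n)%N = N -> (\prod_(n <- ms) n)%N = N ->
  let F := fourier ns N in let G := fourier ms N in
  ((equivalent F G <-> perm_equivalent F G) /\
   (perm_equivalent F G <-> index_groups_iso ns ms N)) /\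
  (equivalent F G ->
     pairset_eq (MapP F G) (pairset_mul (MapS F G) (@StabZ ns N)) /\
     pairset_eq (MapP F G) (pairset_mul (@StabZ ms N) (MapS F G))).
Proof.
move=> ns_pos ms_pos; case: N => [|n] ns_prod ms_prod F G.
  by have := prod_seq_gt0 ns_pos; rewrite ns_prod.
split; first split.
- exact: equivalent_perm_equivalent.
- by split; [apply: perm_equivalent_index_iso | apply: index_iso_perm_equivalent].
- by split; [apply: MapP_MapS_StabZ | apply: MapP_StabZ_MapS].
Qed.
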